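(* Let $A$ be a metabelian Lie $U$-algebra over a field $k$ and let $A_\Delta$ be its $\Delta$-localisation. Then $A$ and $A_\Delta$ are universally equivalent, i.e. $\mathrm{ucl}(A)=\mathrm{ucl}(A_\Delta)$: they satisfy exactly the same universal sentences of the first-order language of Lie $k$-algebras.
   Context: All algebras are over a fixed field $k$. A Lie algebra is metabelian if $(a\circ b)\circ(c\circ d)=0$ identically; $A^2$ is the ideal spanned by all products; $\mathrm{Fit}(A)$ (Fitting radical) is the ideal generated by all elements lying in nilpotent ideals of $A$. A metabelian Lie algebra $A$ is a $U$-algebra if $\mathrm{Fit}(A)$ is abelian and torsion-free as a module over $R=k[x_\alpha:\alpha\in\Lambda]$, where $\{z_\alpha:\alpha\in\Lambda\}\subseteq A$ is a family whose images form a basis of $A/\mathrm{Fit}(A)$ and the module structure is $b\cdot x_\alpha=b\circ z_\alpha$ for $b\in\mathrm{Fit}(A)$, extended multiplicatively and linearly. $\Delta$-localisation: let $V$ be the $k$-span of $\{z_\alpha\}$, $\Delta$ the ideal of $R$ generated by all $x_\alpha$, $R_\Delta$ the localisation of $R$ at $\Delta$, and $\mathrm{Fit}_\Delta(A)=R_\Delta\otimes_R\mathrm{Fit}(A)$ (containing $\mathrm{Fit}(A)$). $A_\Delta$ is the $k$-space $V\oplus\mathrm{Fit}_\Delta(A)$ with bracket: for $v,w\in V$, $v\circ w$ is the product in $A$ (an element of $\mathrm{Fit}(A)$); products of two elements of $\mathrm{Fit}_\Delta(A)$ are $0$; $u\circ z_\alpha=u\cdot x_\alpha=-z_\alpha\circ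 u$ for $u\in\mathrm{Fit}_\Delta(A)$, extended bilinearly. It is a metabelian Lie algebra containing $A=V\oplus\mathrm{Fit}(A)$ as a subalgebra. The first-order language of Lie $k$-algebras has symbols $\circ,+,-,0$ and a unary function symbol for multiplication by each scalar of $k$; $\mathrm{ucl}(B)$ is the class of Lie $k$-algebras satisfying all universal sentences of this language true in $B$. *)

From mathcomp Require Import all_boot all_algebra.
From mathcomp Require Import mpoly.
Set Implicit Arguments. Unset Strict Implicit. Unset Printing Implicit Defensive.
Import GRing.Theory.
Local Open Scope ring_scope.

Section LieDefs.
Variables (k : fieldType) (A : lmodType k) (br : A -> A -> A).

Definition lie_axioms : Prop :=
  [/\ (forall c x y w, br (c *: x + y) w = c *: br x w + br y w),
      (forall c x y w, br w (c *: x + y) = c *: br w x + br w y),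
      (forall x, br x x = 0)
    & (forall x y w, br x (br y w) + br y (br w x) + br w (br x y) = 0)].

Definition metabelian : Prop :=
  forall a b c d, br (br a b) (br c d) = 0.

Definition lie_ideal (I : A -> Prop) : Prop :=
  [/\ I 0, (forall x y, I x -> I y -> I (x + y)),
      (forall (c : k) x, I x -> I (c *: x))
    & (forall x a, I x -> I (br x a) /\ I (br a x))].

Definition lnprod (x : A) (ys : seq A) : A := foldl br x ys.

(** an ideal I is nilpotent iff I^(c+1) = 0 for some c, i.e. all left-normed
    products of c+1 elements of I vanish *)
Definition nilpotent_ideal (I : A -> Prop) : Prop :=
  lie_ideal I /\
  exists c : nat, forall x ys, size ys = c -> I x ->
    (forall y, y \in ys -> I y) -> lnprod x ys = 0.

(** Fitting radical: the ideal generated by all elements lying in nilpotent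
    ideals (smallest ideal containing them) *)
Definition fit (x : A) : Prop :=
  forall J, lie_ideal J ->
    (forall I y, nilpotent_ideal I -> I y -> J y) -> J x.

Variables (Lam : Type) (z : Lam -> A).

Definition zcomb (n : nat) (idx : 'I_n -> Lam) (c : 'I_n -> k) : A :=
  \sum_(i < n) c i *: z (idx i).

(** the images of the z_alpha form a basis of A / Fit(A) *)
Definition fit_basis : Prop :=
  (forall n (idx : 'I_n -> Lam) (c : 'I_n -> k), injective idx ->
      fit (zcomb idx c) -> forall i, c i = 0) /\
  (forall a, exists n (idx : 'I_n -> Lam) (c : 'I_n -> k), fit (a - zcomb idx c)).

Definition inV (v : A) : Prop :=
  exists n (idx : 'I_n -> Lam) (c : 'I_n -> k), v = zcomb idx c.

(** action of the monomial x_(idx 0)^(m 0) ... x_(idx (n-1))^(m (n-1)) on b,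
    where b . x_alpha = b o z_alpha *)
Definition mon_act (n : nat) (idx : 'I_n -> Lam) (m : 'X_{1..n}) (b : A) : A :=
  foldr (fun i x => iter (m i) (fun y => br y (z (idx i))) x) b (enum 'I_n).

(** action of the polynomial p(x_(idx 0), ..., x_(idx (n-1))) in
    R = k[x_alpha : alpha in Lam] on b *)
Definition poly_act (n : nat) (idx : 'I_n -> Lam) (p : {mpoly k[n]}) (b : A) : A :=
  \sum_(m <- msupp p) p@_m *: mon_act idx m b.

(** Fit(A) torsion-free as R-module: every element of R lies in the image of
    some {mpoly k[n]} under x_i |-> x_(idx i) with idx injective *)
Definition fit_torsion_free : Prop :=
  forall n (idx : 'I_n -> Lam) (p : {mpoly k[n]}) (b : A),
    injective idx -> p != 0 -> fit b -> poly_act idx p b = 0 -> b = 0.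

Definition U_algebra : Prop :=
  (forall a b, fit a -> fit b -> br a b = 0) /\ fit_torsion_free.

(** elements of S = R \ Delta: polynomials with nonzero constant term *)
Record sfactor := SFactor {
  sf_n : nat;
  sf_idx : 'I_sf_n -> Lam;
  sf_p : {mpoly k[sf_n]};
  sf_const : sf_p@_0%MM != 0 }.
Arguments sf_idx : clear implicits.
Arguments sf_p : clear implicits.

(** a denominator is a finite product of elements of S *)
Definition den := seq sfactor.

Definition den_act (g : den) (b : A) : A :=
  foldr (fun (f : sfactor) x => poly_act (sf_idx f) (sf_p f) x) b g.

(** representatives of elements of A_Delta = V (+) Fit_Delta(A):
    (v, b, g) stands for v + b/g with v in V, b in Fit(A), g in S *)
Definition loc_car := (A * A * den)%type.

Definition loc_dom (x : loc_car) : Prop := inV x.1.1 /\ fit x.1.2.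

(** b/g = b'/g' in S^{-1} Fit(A) = R_Delta (x)_R Fit(A) iff
    t (g' b - g b') = 0 for some t in S *)
Definition loc_eqv (x y : loc_car) : Prop :=
  x.1.1 = y.1.1 /\
  exists t : den, den_act t (den_act y.2 x.1.2 - den_act x.2 y.1.2) = 0.

Definition loc_zero : loc_car := (0, 0, [::]).
Definition loc_add (x y : loc_car) : loc_car :=
  (x.1.1 + y.1.1, den_act y.2 x.1.2 + den_act x.2 y.1.2, x.2 ++ y.2).
Definition loc_opp (x : loc_car) : loc_car := (- x.1.1, - x.1.2, x.2).
Definition loc_scale (c : k) (x : loc_car) : loc_car :=
  (c *: x.1.1, c *: x.1.2, x.2).
(** (v + b/g) o (v' + b'/g') = v o v' + (b o v')/g - (b' o v)/g'
    (using u o z_alpha = u . x_alpha = - z_alpha o u, extended bilinearly,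
    and Fit_Delta o Fit_Delta = 0), written over the denominator g g' *)
Definition loc_br (x y : loc_car) : loc_car :=
  (0, den_act (x.2 ++ y.2) (br x.1.1 y.1.1)
       + den_act y.2 (br x.1.2 y.1.1) - den_act x.2 (br y.1.2 x.1.1),
   x.2 ++ y.2).

End LieDefs.

Inductive term (k : Type) : Type :=
  | TVar of nat
  | TZero
  | TAdd of term k & term k
  | TOpp of term k
  | TScale of k & term k
  | TBr of term k & term k.

Inductive qf_formula (k : Type) : Type :=
  | FTrue | FFalse
  | FEq of term k & term k
  | FNot of qf_formula k
  | FAnd of qf_formula k & qf_formula k
  | FOr of qf_formula k & qf_formula k
  | FImp of qf_formula k & qf_formula k.

(** an L-structure, presented by a set of representatives [dom] in a carrier
    type modulo a congruence [eqv] (for A itself: all of A, Leibniz equality) *)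
Record lstruct (k : Type) := LStruct {
  lcar : Type;
  ldom : lcar -> Prop;
  leqv : lcar -> lcar -> Prop;
  lzero : lcar;
  ladd : lcar -> lcar -> lcar;
  lopp : lcar -> lcar;
  lscale : k -> lcar -> lcar;
  lbr : lcar -> lcar -> lcar }.

Fixpoint eval_term (k : Type) (S : lstruct k) (e : nat -> lcar S) (t : term k)
  : lcar S :=
  match t with
  | TVar i => e i
  | TZero => lzero S
  | TAdd t1 t2 => ladd (eval_term e t1) (eval_term e t2)
  | TOpp t1 => lopp (eval_term e t1)
  | TScale c t1 => lscale c (eval_term e t1)
  | TBr t1 t2 => lbr (eval_term e t1) (eval_term e t2)
  end.

Fixpoint holds (k : Type) (S : lstruct k) (e : nat -> lcar S) (f : qf_formula k)
  : Prop :=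
  match f with
  | FTrue => True
  | FFalse => False
  | FEq t1 t2 => leqv (eval_term e t1) (eval_term e t2)
  | FNot f1 => ~ holds e f1
  | FAnd f1 f2 => holds e f1 /\ holds e f2
  | FOr f1 f2 => holds e f1 \/ holds e f2
  | FImp f1 f2 => holds e f1 -> holds e f2
  end.

(** the universal sentence  forall x_0 x_1 ..., f  (universal closure of the
    quantifier-free f) is true in S *)
Definition univ_true (k : Type) (S : lstruct k) (f : qf_formula k) : Prop :=
  forall e : nat -> lcar S, (forall i, ldom (e i)) -> holds e f.

Definition univ_equiv (k : Type) (S1 S2 : lstruct k) : Prop :=
  forall f : qf_formula k, univ_true S1 f <-> univ_true S2 f.

Definition lie_struct (k : fieldType) (A : lmodType k) (br : A -> A -> A)
  : lstruct k :=
  @LStruct k A (fun _ => True) (@eq A) 0 +%R (fun x => - x) *:%R br.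

Definition loc_struct (k : fieldType) (A : lmodType k) (br : A -> A -> A)
  (Lam : Type) (z : Lam -> A) : lstruct k :=
  @LStruct k (@loc_car k A Lam) (@loc_dom k A br Lam z) (@loc_eqv k A br Lam z)
    (@loc_zero k A Lam) (@loc_add k A br Lam z) (@loc_opp k A Lam)
    (@loc_scale k A Lam) (@loc_br k A br Lam z).

From mathcomp Require Import all_boot all_algebra.
From mathcomp Require Import mpoly.
From mathcomp Require Import zify.
From Stdlib Require Import Classical ClassicalEpsilon FunctionalExtensionality.
(* Universal sentences true in A_Delta hold in its subalgebra A. Conversely, a universal
   sentence only involves terms of bounded size in finitely many elements v_i + b_i/g_i of
   A_Delta, and these can be moved into A by clearing denominators. An element s of
   S = R \ Delta acts on A as s(0) + D with D a derivation with values in the abelian ideal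
   Fit(A), hence [s a, s b] = s(0) s [a, b]; so with G = (g_0 ... g_(n-1))^n and C = G(0),
   v + b/g |-> C^-1 (G v + (G/g) b) respects the operations on all terms of size at most n.
   It is injective because Fit(A) is torsion-free and V meets Fit(A) trivially. *)

Set Implicit Arguments. Unset Strict Implicit. Unset Printing Implicit Defensive.
Import GRing.Theory.
Local Open Scope ring_scope.

Section TermSize.
Variable k : Type.

Fixpoint tcount (t : term k) (i : nat) : nat :=
  match t with
  | TVar j => (j == i) : nat
  | TZero => 0
  | TAdd a b | TBr a b => tcount a i + tcount b i
  | TOpp a | TScale _ a => tcount a i
  end.

Fixpoint tsize (t : term k) : nat :=
  match t with
  | TVar _ => 1
  | TZero => 0
  | TAdd a b | TBr a b => tsize a + tsize b
  | TOpp a | TScale _ a => tsize a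
  end.

Fixpoint tvar_sup (t : term k) : nat :=
  match t with
  | TVar j => j.+1
  | TZero => 0
  | TAdd a b | TBr a b => maxn (tvar_sup a) (tvar_sup b)
  | TOpp a | TScale _ a => tvar_sup a
  end.

Definition tbound (t : term k) : nat := maxn (tsize t) (tvar_sup t).

Fixpoint fbound (f : qf_formula k) : nat :=
  match f with
  | FTrue | FFalse => 0
  | FEq a b => maxn (tbound a) (tbound b)
  | FNot g => fbound g
  | FAnd g h | FOr g h | FImp g h => maxn (fbound g) (fbound h)
  end.

Lemma tcount_le_size t i : (tcount t i <= tsize t)%N.
Proof.
by elim: t => //= [j|a iha b ihb|a iha b ihb]; [case: (j == i)|exact: leq_add..].
Qed.

End TermSize.

Section LieAlgebra.
Variables (k : fieldType) (A : lmodType k) (br : A -> A -> A).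
Hypothesis lieA : lie_axioms br.

Lemma brZDl c x y w : br (c *: x + y) w = c *: br x w + br y w.
Proof. by have [] := lieA. Qed.
Lemma brZDr c x y w : br w (c *: x + y) = c *: br w x + br w y.
Proof. by have [] := lieA. Qed.
Lemma brxx x : br x x = 0.
Proof. by have [] := lieA. Qed.
Lemma jacobi x y w : br x (br y w) + br y (br w x) + br w (br x y) = 0.
Proof. by have [] := lieA. Qed.

Lemma brDl x y w : br (x + y) w = br x w + br y w.
Proof. by have := brZDl 1 x y w; rewrite !scale1r. Qed.
Lemma brDr x y w : br w (x + y) = br w x + br w y.
Proof. by have := brZDr 1 x y w; rewrite !scale1r. Qed.
Lemma br0l w : br 0 w = 0.
Proof. by apply: (addrI (br 0 w)); rewrite -brDl !addr0. Qed.
Lemma br0r w : br w 0 = 0.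
Proof. by apply: (addrI (br w 0)); rewrite -brDr !addr0. Qed.
Lemma brZl c x w : br (c *: x) w = c *: br x w.
Proof. by rewrite -[c *: x]addr0 brZDl br0l addr0. Qed.
Lemma brZr c x w : br w (c *: x) = c *: br w x.
Proof. by rewrite -[c *: x]addr0 brZDr br0r addr0. Qed.
Lemma brNl x w : br (- x) w = - br x w.
Proof. by rewrite -scaleN1r brZl scaleN1r. Qed.

Lemma br_anti x y : br x y = - br y x.
Proof.
have := brxx (x + y); rewrite brDl !brDr !brxx add0r addr0 => /eqP.
by rewrite addr_eq0 => /eqP.
Qed.

Lemma br_leibniz a b w : br (br a b) w = br (br a w) b + br a (br b w).
Proof.
have := jacobi a b w.
rewrite [br b (br w a)]br_anti [br w a]br_anti brNl opprK [br w (br a b)]br_anti.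
by move/eqP; rewrite addr_eq0 opprK => /eqP <-; rewrite addrC.
Qed.

Lemma fit_lie_ideal : lie_ideal br (fit br).
Proof.
split=> [J [] //|x y fx fy J idJ sub|c x fx J idJ sub|x a fx].
- by have [_ + _ _] := idJ; apply; [exact: fx|exact: fy].
- by have [_ _ + _] := idJ; apply; exact: fx.
- by split=> J idJ sub; have [_ _ _ /(_ x a (fx J idJ sub))[]] := idJ.
Qed.

Lemma fit0 : fit br 0.
Proof. by have [] := fit_lie_ideal. Qed.
Lemma fitD x y : fit br x -> fit br y -> fit br (x + y).
Proof. by have [_ + _ _] := fit_lie_ideal; apply. Qed.
Lemma fitZ c x : fit br x -> fit br (c *: x).
Proof. by have [_ _ + _] := fit_lie_ideal; apply. Qed.
Lemma fitN x : fit br x -> fit br (- x).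
Proof. by rewrite -scaleN1r; apply: fitZ. Qed.
Lemma fitB x y : fit br x -> fit br y -> fit br (x - y).
Proof. by move=> fx fy; apply: fitD => //; apply: fitN. Qed.
Lemma fit_brl x a : fit br x -> fit br (br x a).
Proof. by have [_ _ _ h] := fit_lie_ideal => /(h _ a)[]. Qed.

Hypothesis metaA : metabelian br.

Inductive derived : A -> Prop :=
  | derived0 : derived 0
  | derivedD x y : derived x -> derived y -> derived (x + y)
  | derivedZ c x : derived x -> derived (c *: x)
  | derived_br a b : derived (br a b).

Lemma derived_abelian x y : derived x -> derived y -> br x y = 0.
Proof.
move=> dx dy; elim: dx => [|x1 x2 _ h1 _ h2|c x1 _ h|a b].
- by rewrite br0l.
- by rewrite brDl h1 h2 addr0.
- by rewrite brZl h scaler0.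
elim: dy => [|y1 y2 _ h1 _ h2|c y1 _ h|c d].
- by rewrite br0r.
- by rewrite brDr h1 h2 addr0.
- by rewrite brZr h scaler0.
exact: metaA.
Qed.

Lemma derived_nilpotent : nilpotent_ideal br derived.
Proof.
split.
  split=> [|x y|c x|x a _]; [exact: derived0|exact: derivedD|exact: derivedZ|].
  by split; apply: derived_br.
exists 1%N => x [|y [|]] //= _ dx dy; rewrite /lnprod /=.
by apply: derived_abelian => //; apply: dy; rewrite inE.
Qed.

Lemma fit_br a b : fit br (br a b).
Proof. by move=> J _ sub; apply: (sub derived); [exact: derived_nilpotent|exact: derived_br]. Qed.

Hypothesis fit_abelian : forall a b, fit br a -> fit br b -> br a b = 0.

(* Jacobi, with [br a b] in the abelian ideal Fit(A). *)
Lemma fit_brAC u a b : fit br u -> br (br u a) b = br (br u b) a.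
Proof.
move=> fu; have := jacobi u a b; rewrite (fit_abelian fu (fit_br a b)) add0r.
rewrite [br a (br b u)]br_anti [br b u]br_anti brNl opprK [br b _]br_anti.
by move/eqP; rewrite addr_eq0 opprK => /eqP.
Qed.

Section LinearFacts.
Variable T : A -> A.
Hypothesis linT : linear T.

Lemma linD x y : T (x + y) = T x + T y.
Proof. by have := linT 1 x y; rewrite !scale1r. Qed.
Lemma lin0 : T 0 = 0.
Proof. by apply: (addrI (T 0)); rewrite -linD !addr0. Qed.
Lemma linZ c x : T (c *: x) = c *: T x.
Proof. by have := linT c x 0; rewrite !addr0 lin0 addr0. Qed.
Lemma linN x : T (- x) = - T x.
Proof. by rewrite -scaleN1r linZ scaleN1r. Qed.
Lemma linB x y : T (x - y) = T x - T y.
Proof. by rewrite linD linN. Qed.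
Lemma lin_sum (I : Type) (s : seq I) (P : pred I) (F : I -> A) :
  T (\sum_(i <- s | P i) F i) = \sum_(i <- s | P i) T (F i).
Proof. by elim/big_rec2: _ => [|i x y _ <-]; rewrite ?lin0 ?linD. Qed.

End LinearFacts.

(* Endomorphisms of the A-module Fit(A) (extended linearly to all of A). *)
Definition fit_endo (T : A -> A) : Prop :=
  [/\ linear T, forall u, fit br u -> fit br (T u)
    & forall u a, fit br u -> T (br u a) = br (T u) a].

Definition fit_central (T : A -> A) : Prop :=
  fit_endo T /\ forall S, fit_endo S -> forall u, fit br u -> S (T u) = T (S u).

Definition fit_derivation (D : A -> A) : Prop :=
  (forall a, fit br (D a)) /\ forall a b, D (br a b) = br (D a) b + br a (D b).

Definition ad (w : A) : A -> A := br^~ w.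

Lemma fit_endo_comp T S : fit_endo T -> fit_endo S -> fit_endo (T \o S).
Proof.
case=> linT fitT brT [linS fitS brS]; split=> [c x y|u fu|u a fu] /=.
- by rewrite linS linT.
- by apply: fitT; apply: fitS.
- by rewrite brS // brT //; apply: fitS.
Qed.

Lemma fit_central_id : fit_central id.
Proof. by split. Qed.

Lemma fit_central_comp T S : fit_central T -> fit_central S -> fit_central (T \o S).
Proof.
case=> endoT comT [endoS comS]; split; first exact: fit_endo_comp.
move=> R endoR u fu /=; have [_ fitS _] := endoS.
by rewrite (comT R endoR (S u) (fitS u fu)) comS.
Qed.

Lemma fit_central_ad w : fit_central (ad w).
Proof.
do !split; rewrite /ad.
- by move=> c x y; rewrite brZDl.
- by move=> u; apply: fit_brl.
- by move=> u a fu; rewrite fit_brAC.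
- by move=> S [_ _ brS] u fu; rewrite brS.
Qed.

Lemma fit_central_iter j T : fit_central T -> fit_central (iter j T).
Proof.
move=> cT; elim: j => [|j IHj]; first exact: fit_central_id.
exact: fit_central_comp cT IHj.
Qed.

Lemma fit_central_add T S :
  fit_central T -> fit_central S -> fit_central (fun x => T x + S x).
Proof.
case=> [[linT fitT brT] comT] [[linS fitS brS] comS]; do !split.
- by move=> c x y; rewrite linT linS scalerDr addrACA.
- by move=> u fu; apply: fitD; [apply: fitT|apply: fitS].
- by move=> u a fu; rewrite brT // brS // brDl.
- by move=> R endoR u fu; have [linR _ _] := endoR; rewrite linD // comT // comS.
Qed.

Lemma fit_central_scale c T : fit_central T -> fit_central (fun x => c *: T x).
Proof.
case=> [[linT fitT brT] comT]; do !split.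
- by move=> d x y; rewrite linT scalerDr !scalerA mulrC.
- by move=> u fu; apply: fitZ; apply: fitT.
- by move=> u a fu; rewrite brT // brZl.
- by move=> R endoR u fu; have [linR _ _] := endoR; rewrite linZ // comT.
Qed.

Lemma fit_central_sum (I : Type) (s : seq I) (P : pred I) (F : I -> A -> A) :
  (forall i, P i -> fit_central (F i)) ->
  fit_central (fun x => \sum_(i <- s | P i) F i x).
Proof.
move=> cF; elim: s => [|i s IHs].
  rewrite (_ : (fun x => _) = fun _ => 0); last first.
    by apply: functional_extensionality => x; rewrite big_nil.
  split; first split=> [c x y|u _|u a _]; rewrite ?scaler0 ?addr0 ?br0l //.
  - exact: fit0.
  - by move=> R [linR _ _] u _; rewrite lin0.
rewrite (_ : (fun x => _) = if P i then fun x => F i x + \sum_(j <- s | P j) F j x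
                            else fun x => \sum_(j <- s | P j) F j x); last first.
  by apply: functional_extensionality => x; rewrite big_cons; case: (P i).
by case Pi: (P i) => //; exact: fit_central_add (cF i Pi) IHs.
Qed.

Lemma fit_derivation_ad w : fit_derivation (ad w).
Proof. by split=> [a|a b]; [exact: fit_br|rewrite /ad br_leibniz]. Qed.

Lemma fit_derivation_comp T D : fit_endo T -> fit_derivation D -> fit_derivation (T \o D).
Proof.
case=> linT fitT brT [fitD derD]; split=> [a|a b] /=; first exact: fitT.
rewrite derD linD // brT //; congr (_ + _).
by rewrite br_anti linN // brT // -br_anti.
Qed.

Lemma fit_derivation_add D E :
  fit_derivation D -> fit_derivation E -> fit_derivation (fun x => D x + E x).
Proof.
case=> fitD' derD [fitE derE]; split=> [a|a b]; first exact: fitD.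
by rewrite derD derE brDl brDr addrACA.
Qed.

Lemma fit_derivation_scale c D : fit_derivation D -> fit_derivation (fun x => c *: D x).
Proof.
case=> fitD' derD; split=> [a|a b]; first exact: fitZ.
by rewrite derD scalerDr brZl brZr.
Qed.

Lemma fit_derivation_sum (I : Type) (s : seq I) (P : pred I) (F : I -> A -> A) :
  (forall i, P i -> fit_derivation (F i)) ->
  fit_derivation (fun x => \sum_(i <- s | P i) F i x).
Proof.
move=> dF; elim: s => [|i s IHs].
  rewrite (_ : (fun x => _) = fun _ => 0); last first.
    by apply: functional_extensionality => x; rewrite big_nil.
  by split=> [a|a b]; rewrite ?br0l ?br0r ?addr0 //; exact: fit0.
rewrite (_ : (fun x => _) = if P i then fun x => F i x + \sum_(j <- s | P j) F j x
                            else fun x => \sum_(j <- s | P j) F j x); last first.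
  by apply: functional_extensionality => x; rewrite big_cons; case: (P i).
by case Pi: (P i) => //; exact: fit_derivation_add (dF i Pi) IHs.
Qed.

Definition scaled_hom (c : k) (T : A -> A) : Prop :=
  (forall a b, br (T a) (T b) = c *: T (br a b)) /\ forall a, fit br (T a - c *: a).

Lemma scaled_hom_derivation c D : fit_derivation D ->
  scaled_hom c (fun x => c *: x + D x).
Proof.
case=> fitD' derD; split=> [a b|a]; last by rewrite addrAC subrr add0r.
rewrite brDl !brDr (fit_abelian (fitD' a) (fitD' b)) addr0 !brZl !brZr derD.
by rewrite !scalerDr [_ *: br (D a) b + _]addrC addrA.
Qed.

Lemma scaled_hom_comp c d T S : linear T ->
  scaled_hom c T -> scaled_hom d S -> scaled_hom (c * d) (T \o S).
Proof.
move=> linT [homT fitT] [homS fitS]; split=> [a b|a] /=.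
  by rewrite homT homS linZ // scalerA.
have -> : T (S a) - (c * d) *: a = (T (S a) - c *: S a) + c *: (S a - d *: a).
  by rewrite scalerBr scalerA addrA subrK.
by apply: fitD; [apply: fitT|apply: fitZ; apply: fitS].
Qed.

Variables (Lam : Type) (z : Lam -> A).

Lemma iter_ad_derivation j w : fit_derivation (iter j.+1 (ad w)).
Proof.
rewrite (_ : iter j.+1 _ = iter j (ad w) \o ad w); last first.
  by apply: functional_extensionality => x; rewrite iterSr.
by apply: fit_derivation_comp; [case: (fit_central_iter j (fit_central_ad w))|exact: fit_derivation_ad].
Qed.

Section Monomials.
Variables (n : nat) (idx : 'I_n -> Lam).

Definition mon_act_seq (m : 'X_{1..n}) (s : seq 'I_n) (x : A) : A :=
  foldr (fun i x => iter (m i) (ad (z (idx i))) x) x s.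

Lemma mon_act_seq_central m s : fit_central (mon_act_seq m s).
Proof.
elim: s => [|i s IHs]; first exact: fit_central_id.
exact: fit_central_comp (fit_central_iter _ (fit_central_ad _)) IHs.
Qed.

Lemma mon_act_seq_id (m : 'X_{1..n}) (s : seq 'I_n) : all (fun i => m i == 0%N) s -> mon_act_seq m s =1 id.
Proof.
elim: s => [|i s IHs] //= /andP[/eqP mi /IHs ids] x.
by rewrite /mon_act_seq /= mi -/(mon_act_seq m s x) ids.
Qed.

Lemma mon_act_seq_derivation (m : 'X_{1..n}) (s : seq 'I_n) :
  ~~ all (fun i => m i == 0%N) s -> fit_derivation (mon_act_seq m s).
Proof.
elim: s => [|i s IHs] //; rewrite [all _ _]/=.
case: (boolP (all _ s)) => [alls|/IHs ders _]; last first.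
  exact: fit_derivation_comp (fit_central_iter _ (fit_central_ad _)).1 ders.
rewrite andbT => mi.
have -> : mon_act_seq m (i :: s) = iter (m i) (ad (z (idx i))).
  apply: functional_extensionality => x.
  by rewrite /mon_act_seq /= -/(mon_act_seq m s x) mon_act_seq_id.
by case: (m i) mi => // j _; exact: iter_ad_derivation.
Qed.

Lemma mon_act_central m : fit_central (mon_act br z idx m).
Proof. exact: mon_act_seq_central. Qed.

Lemma mon_act0 x : mon_act br z idx 0%MM x = x.
Proof. by apply: mon_act_seq_id; apply/allP => i _; rewrite mnm0E. Qed.

Lemma mon_act_derivation m : m != 0%MM -> fit_derivation (mon_act br z idx m).
Proof.
move=> m0; apply: mon_act_seq_derivation; apply: contra m0 => /allP m0.
by apply/eqP/mnmP => i; rewrite mnm0E; apply/eqP/m0; rewrite mem_enum.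
Qed.

Lemma poly_act_central p : fit_central (poly_act br z idx p).
Proof. by apply: fit_central_sum => m _; apply/fit_central_scale/mon_act_central. Qed.

Lemma poly_act_decomp p : exists2 D, fit_derivation D &
  forall x, poly_act br z idx p x = p@_0 *: x + D x.
Proof.
exists (fun x => \sum_(m <- msupp p | m != 0%MM) p@_m *: mon_act br z idx m x).
  by apply: fit_derivation_sum => m m0; apply/fit_derivation_scale/mon_act_derivation.
move=> x; rewrite /poly_act (bigID (fun m => m == 0%MM)) /=; congr (_ + _).
rewrite -big_filter; case: (boolP (0%MM \in msupp p)) => p0.
  by rewrite (filter_pred1_uniq (msupp_uniq p) p0) big_seq1 mon_act0.
rewrite (_ : [seq m <- msupp p | m == 0%MM] = [::]).
  by move: p0; rewrite mcoeff_msupp negbK big_nil => /eqP ->; rewrite scale0r.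
by apply/eqP; rewrite -size_eq0 size_filter eqn0Ngt -has_count; apply/hasPn => m mp; apply: contraNneq p0 => <-.
Qed.

Lemma poly_act_scaled_hom p : scaled_hom p@_0 (poly_act br z idx p).
Proof.
have [D derD actE] := poly_act_decomp p.
rewrite (_ : poly_act _ _ _ _ = fun x => p@_0 *: x + D x).
  exact: scaled_hom_derivation.
exact: functional_extensionality.
Qed.

End Monomials.

Section PolyLinear.
Variables (n : nat) (idx : 'I_n -> Lam).
Local Notation PA := (poly_act br z idx).

Lemma sum_msupp_sub (F : 'X_{1..n} -> A) (p : {mpoly k[n]}) (s : seq 'X_{1..n}) :
  uniq s -> {subset msupp p <= s} ->
  \sum_(m <- msupp p) p@_m *: F m = \sum_(m <- s) p@_m *: F m.
Proof.
move=> us sub; rewrite [RHS](bigID (fun m => m \in msupp p)) /=.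
rewrite [X in _ = _ + X]big1 ?addr0; last first.
  by move=> m; rewrite mcoeff_msupp negbK => /eqP ->; rewrite scale0r.
rewrite -[RHS]big_filter; apply/perm_big/uniq_perm; rewrite ?filter_uniq ?msupp_uniq //.
by move=> m; rewrite mem_filter; case: (boolP (m \in msupp p)) => // /sub ->.
Qed.

Lemma poly_actD p q x : PA (p + q) x = PA p x + PA q x.
Proof.
rewrite /poly_act; set s := undup (msupp p ++ msupp q).
have us : uniq s by apply: undup_uniq.
rewrite !(@sum_msupp_sub _ _ s) //.
- by rewrite -big_split /=; apply: eq_bigr => m _; rewrite mcoeffD scalerDl.
- by move=> m mq; rewrite mem_undup mem_cat mq orbT.
- by move=> m mp; rewrite mem_undup mem_cat mp.
- by move=> m /msuppD_le; rewrite mem_undup.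
Qed.

Lemma poly_actZ c p x : PA (c *: p) x = c *: PA p x.
Proof.
rewrite /poly_act (@sum_msupp_sub _ (c *: p) (msupp p)) ?msupp_uniq //; last exact: msuppZ_le.
by rewrite scaler_sumr; apply: eq_bigr => m _; rewrite mcoeffZ scalerA.
Qed.

Lemma poly_act_sum (I : Type) (r : seq I) (F : I -> {mpoly k[n]}) x :
  PA (\sum_(i <- r) F i) x = \sum_(i <- r) PA (F i) x.
Proof.
elim/big_rec2: _ => [|i y q _ <-]; last by rewrite poly_actD.
by have := poly_actZ 0 0 x; rewrite !scale0r.
Qed.

Lemma poly_actX m x : PA 'X_[m] x = mon_act br z idx m x.
Proof. by rewrite /poly_act msuppX big_seq1 mcoeffX eqxx scale1r. Qed.

Lemma poly_act1 x : PA 1 x = x.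
Proof. by rewrite -mpolyX0 poly_actX mon_act0. Qed.

Lemma mon_act_seq_shift j m s x : uniq s -> fit br x ->
  mon_act_seq idx (mnm1 j + m)%MM s x =
  if j \in s then ad (z (idx j)) (mon_act_seq idx m s x) else mon_act_seq idx m s x.
Proof.
move=> + fx; elim: s => [|i s IHs] //= /andP[si us].
have fs : fit br (mon_act_seq idx m s x).
  by have [[_ + _] _] := mon_act_seq_central idx m s; apply.
rewrite mnmDE mnm1E in_cons -/(mon_act_seq _ _ _ _) IHs //.
case: (eqVneq j i) => [->|ji] /=; first by rewrite (negbTE si) add0n.
rewrite add0n; case: (j \in s) => //.
by have [[_ _ +] _] := fit_central_iter (m i) (fit_central_ad (z (idx i))); apply.
Qed.

Lemma mon_act_shift j m x : fit br x ->
  mon_act br z idx (mnm1 j + m)%MM x = ad (z (idx j)) (mon_act br z idx m x).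
Proof. by move=> fx; have := mon_act_seq_shift j m (enum_uniq 'I_n) fx; rewrite mem_enum; apply. Qed.

Lemma poly_actXM j q x : fit br x -> PA ('X_j * q) x = ad (z (idx j)) (PA q x).
Proof.
move=> fx; rewrite {1}(mpolyE q) mulr_sumr poly_act_sum {2}/poly_act lin_sum; last first.
  by have [[]] := fit_central_ad (z (idx j)).
apply: eq_bigr => m _; rewrite -scalerAr -mpolyXD poly_actZ poly_actX.
by rewrite mon_act_shift // /ad brZl.
Qed.

Lemma poly_actXnM j e q x : fit br x ->
  PA ('X_j ^+ e * q) x = iter e (ad (z (idx j))) (PA q x).
Proof.
by move=> fx; elim: e => [|e IHe]; rewrite ?expr0 ?mul1r // exprS -mulrA poly_actXM // IHe.
Qed.

End PolyLinear.

Section Substitution.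
Variables (n n' : nat) (idx : 'I_n -> Lam) (idx' : 'I_n' -> Lam) (f : 'I_n -> 'I_n').
Hypothesis idx_f : forall i, idx' (f i) = idx i.

Definition subst_var (p : {mpoly k[n]}) : {mpoly k[n']} :=
  \sum_(m <- msupp p) p@_m *: \prod_(i <- enum 'I_n) 'X_(f i) ^+ m i.

Lemma poly_act_prodX (m : 'X_{1..n}) s x : fit br x ->
  poly_act br z idx' (\prod_(i <- s) 'X_(f i) ^+ m i) x = mon_act_seq idx m s x.
Proof.
move=> fx; elim: s => [|i s IHs]; first by rewrite big_nil poly_act1.
by rewrite big_cons poly_actXnM // IHs idx_f.
Qed.

Lemma poly_act_subst_var p x : fit br x ->
  poly_act br z idx' (subst_var p) x = poly_act br z idx p x.
Proof.
move=> fx; rewrite poly_act_sum [RHS]/poly_act; apply: eq_bigr => m _.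
by rewrite poly_actZ poly_act_prodX.
Qed.

Lemma mcoeff0_prodX (m : 'X_{1..n}) :
  (\prod_(i <- enum 'I_n) ('X_(f i) : {mpoly k[n']}) ^+ m i)@_0 = (m == 0%MM)%:R.
Proof.
rewrite mprodXnE mcoeffX; congr (_ %:R).
rewrite -mdeg_eq0 mdeg_sum -[m == 0%MM]mdeg_eq0 mdegE.
by rewrite (eq_bigr (fun i => m i)) ?big_enum // => i _; rewrite mdegMn mdeg1 mul1n.
Qed.

Lemma mcoeff0_subst_var p : (subst_var p)@_0 = p@_0.
Proof.
rewrite {2}(mpolyE p) /subst_var.
elim/big_rec2: _ => [|m y1 y2 _ IHy]; first by rewrite !mcoeff0.
by rewrite !mcoeffD !mcoeffZ mcoeff0_prodX mcoeffX IHy.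
Qed.

End Substitution.

Lemma factor_injective n (idx : 'I_n -> Lam) :
  exists n' (idx' : 'I_n' -> Lam) (f : 'I_n -> 'I_n'),
    injective idx' /\ forall i, idx' (f i) = idx i.
Proof.
elim: n idx => [|n IHn] idx; first by exists 0%N, idx, id; split=> // [[]].
have [n' [idx' [f [inj_idx' idx_f]]]] := IHn (fun i => idx (lift ord0 i)).
have [[j idx'j]|new0] := classic (exists j, idx' j = idx ord0).
  exists n', idx', (fun i => if unlift ord0 i is Some i' then f i' else j); split => // i.
  by case: unliftP => [i' ->|->].
exists n'.+1, (fun l => if unlift ord0 l is Some l' then idx' l' else idx ord0),
  (fun i => if unlift ord0 i is Some i' then lift ord0 (f i') else ord0); split.
  move=> l1 l2; case: unliftP => [l1' ->|->]; case: unliftP => [l2' ->|->] //.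
  - by move/inj_idx' ->.
  - by move=> e; case: new0; exists l1'.
  - by move=> e; case: new0; exists l2'.
by move=> i /=; case: (unliftP ord0 i) => [i' ->|->]; rewrite ?liftK ?unlift_none.
Qed.

Hypothesis torsion_free : fit_torsion_free br z.

(* Torsion-freeness for possibly non-injective indexings: identifying variables may kill
   a polynomial, but not its constant term. *)
Lemma poly_act_eq0 n (idx : 'I_n -> Lam) (p : {mpoly k[n]}) b :
  p@_0 != 0 -> fit br b -> poly_act br z idx p b = 0 -> b = 0.
Proof.
move=> p0 fb pb0; have [n' [idx' [f [inj_idx' idx_f]]]] := factor_injective idx.
apply: (torsion_free (p := subst_var f p) inj_idx') => //.
  by apply: contraNneq p0 => e; rewrite -(mcoeff0_subst_var f) e mcoeff0.
by rewrite (poly_act_subst_var idx_f).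
Qed.

Definition den_const (g : den k Lam) : k := \prod_(f <- g) (sf_p f)@_0.

Lemma den_const_neq0 g : den_const g != 0.
Proof.
by rewrite /den_const; elim: g => [|f g IHg]; rewrite ?big_nil ?oner_neq0 // big_cons mulf_neq0 ?sf_const.
Qed.

Lemma den_act_cat g1 g2 x : den_act br z (g1 ++ g2) x = den_act br z g1 (den_act br z g2 x).
Proof. by rewrite /den_act foldr_cat. Qed.

Lemma den_act_central g : fit_central (den_act br z g).
Proof.
elim: g => [|f g IHg]; first exact: fit_central_id.
exact: fit_central_comp (poly_act_central _ _) IHg.
Qed.

Lemma den_act_fit g b : fit br b -> fit br (den_act br z g b).
Proof. by have [[_ + _] _] := den_act_central g; apply. Qed.

Lemma den_act_scaled_hom g : scaled_hom (den_const g) (den_act br z g).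
Proof.
rewrite /den_const; elim: g => [|f g IHg].
  by rewrite big_nil; split=> [a b|a]; rewrite !scale1r // subrr; exact: fit0.
rewrite big_cons; have [[linP _ _] _] := poly_act_central (@sf_idx _ _ f) (sf_p f).
exact: scaled_hom_comp linP (poly_act_scaled_hom _ _) IHg.
Qed.

Lemma den_act_eq0 g b : fit br b -> den_act br z g b = 0 -> b = 0.
Proof.
move=> fb; elim: g => [//|f g IHg] /= gb0; apply: IHg.
exact: poly_act_eq0 (sf_const f) (den_act_fit g fb) gb0.
Qed.

Lemma inV0 : inV z 0.
Proof.
exists 0%N, (fun i : 'I_0 => match i with @Ordinal _ _ h => False_rect _ (notF h) end).
by exists (fun _ => 0); rewrite /zcomb big_ord0.
Qed.

Lemma inVZ c v : inV z v -> inV z (c *: v).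
Proof.
case=> n [idx [cv ->]]; exists n, idx, (fun i => c * cv i).
by rewrite /zcomb scaler_sumr; apply: eq_bigr => i _; rewrite scalerA.
Qed.

Lemma inVD v w : inV z v -> inV z w -> inV z (v + w).
Proof.
case=> n1 [idx1 [c1 ->]] [n2 [idx2 [c2 ->]]].
exists (n1 + n2)%N, (fun i => match split i with inl a => idx1 a | inr b => idx2 b end),
  (fun i => match split i with inl a => c1 a | inr b => c2 b end).
rewrite /zcomb big_split_ord /=; congr (_ + _); apply: eq_bigr => i _.
  by rewrite (unsplitK (inl _ i)).
by rewrite (unsplitK (inr _ i)).
Qed.

Lemma inVB v w : inV z v -> inV z w -> inV z (v - w).
Proof. by move=> vV wV; apply: inVD => //; rewrite -scaleN1r; apply: inVZ. Qed.

Hypothesis basis : fit_basis br z.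

Lemma inV_fit_eq0 v : inV z v -> fit br v -> v = 0.
Proof.
case=> n [idx [c ->]] fv; have [n' [idx' [f [inj_idx' idx_f]]]] := factor_injective idx.
pose c' (j : 'I_n') := \sum_(i < n | f i == j) c i.
have reindex : zcomb z idx c = zcomb z idx' c'.
  rewrite /zcomb (partition_big f predT) //=; apply: eq_bigr => j _.
  by rewrite scaler_suml; apply: eq_bigr => i /eqP <-; rewrite idx_f.
rewrite reindex in fv *.
by rewrite /zcomb big1 // => j _; rewrite (basis.1 _ _ _ inj_idx' fv j) scale0r.
Qed.

Lemma inV_fit_decomp a : exists v b, [/\ inV z v, fit br b & a = v + b].
Proof.
have [n [idx [c fa]]] := basis.2 a.
by exists (zcomb z idx c), (a - zcomb z idx c); split=> //; [exists n, idx, c|rewrite addrC subrK].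
Qed.

Section DenPowers.
Variable gs : nat -> den k Lam.

Definition den_pow (s : seq nat) (c : nat -> nat) (x : A) : A :=
  foldr (fun j y => iter (c j) (den_act br z (gs j)) y) x s.

Definition den_pow_seq (s : seq nat) (c : nat -> nat) : den k Lam :=
  flatten [seq flatten (nseq (c j) (gs j)) | j <- s].

Lemma den_act_pow_seq s c x : den_act br z (den_pow_seq s c) x = den_pow s c x.
Proof.
elim: s => [//|j s IHs] /=; rewrite den_act_cat IHs.
by elim: (c j) => [//|m IHm] /=; rewrite den_act_cat IHm.
Qed.

Lemma den_pow_central s c : fit_central (den_pow s c).
Proof.
rewrite (_ : den_pow s c = den_act br z (den_pow_seq s c)); first exact: den_act_central.
by apply: functional_extensionality => x; rewrite den_act_pow_seq.
Qed.

Lemma den_powD s c1 c2 u : fit br u ->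
  den_pow s (fun j => c1 j + c2 j)%N u = den_pow s c1 (den_pow s c2 u).
Proof.
move=> fu; elim: s => [//|j s IHs] /=; rewrite IHs iterD; congr (iter _ _ _).
have [[_ fit2 _] _] := den_pow_central s c2.
have [_ com1] := den_pow_central s c1; rewrite com1 //; last exact: fit2.
by have [] := fit_central_iter (c2 j) (den_act_central (gs j)).
Qed.

Lemma eq_den_pow s c c' x : {in s, c =1 c'} -> den_pow s c x = den_pow s c' x.
Proof.
elim: s => [//|j s IHs] cc' /=; rewrite cc' ?mem_head // IHs // => i si.
by apply: cc'; rewrite in_cons si orbT.
Qed.

Lemma den_pow0 s x : den_pow s (fun _ => 0%N) x = x.
Proof. by elim: s => [//|j s IHs] /=; rewrite IHs. Qed.

Lemma den_pow_delta s i u : uniq s -> i \in s ->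
  den_pow s (fun j => (i == j) : nat) u = den_act br z (gs i) u.
Proof.
elim: s => [//|j s IHs] /= /andP[js us]; rewrite in_cons.
case: (eqVneq i j) => [ij|ij] /= si; last by rewrite IHs.
subst j; rewrite (eq_den_pow (c' := fun _ => 0%N)) ?den_pow0 // => l sl.
by case: (eqVneq i l) => // il; rewrite il sl in js.
Qed.

End DenPowers.

Section Embedding.
Variables (e : nat -> loc_car A Lam) (n : nat).
Hypothesis e_dom : forall i, loc_dom br z (e i).
Local Notation full := (fun _ : nat => n).

Definition gpow (c : nat -> nat) : A -> A := den_pow (fun j => (e j).2) (iota 0 n) c.

Definition gpow_seq (c : nat -> nat) : den k Lam := den_pow_seq (fun j => (e j).2) (iota 0 n) c.

Definition gconst : k := den_const (gpow_seq full).

(* With [G = gpow full] and [C = gconst] its constant term, [v + b/g] is sent to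
   [C^-1 (G v + (G/g) b)], where [g] acts as [gpow c], so that [G/g = gpow (n - c)]. *)
Definition embed (c : nat -> nat) (x : loc_car A Lam) : A :=
  gconst^-1 *: (gpow full x.1.1 + gpow (fun j => n - c j)%N x.1.2).

Definition loc_rep (c : nat -> nat) (x : loc_car A Lam) : Prop :=
  [/\ inV z x.1.1, fit br x.1.2 & forall u, fit br u -> den_act br z x.2 u = gpow c u].

Lemma gconst_neq0 : gconst != 0.
Proof. exact: den_const_neq0. Qed.

Lemma den_act_gpow_seq c x : den_act br z (gpow_seq c) x = gpow c x.
Proof. exact: den_act_pow_seq. Qed.

Lemma gpow_endo c : fit_endo (gpow c).
Proof. by have [] := den_pow_central (fun j => (e j).2) (iota 0 n) c. Qed.

Lemma gpow_linear c : linear (gpow c).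
Proof. by have [] := gpow_endo c. Qed.

Lemma gpow_fit c u : fit br u -> fit br (gpow c u).
Proof. by have [_ + _] := gpow_endo c; apply. Qed.

Lemma gpow_commute S c u : fit_endo S -> fit br u -> S (gpow c u) = gpow c (S u).
Proof. by move=> endoS fu; have [_ ->] := den_pow_central (fun j => (e j).2) (iota 0 n) c. Qed.

Lemma gpow_comp a b c u : fit br u -> (forall j, a j + b j = c j)%N ->
  gpow a (gpow b u) = gpow c u.
Proof. by move=> fu abc; rewrite /gpow -den_powD //; apply: eq_den_pow => j _. Qed.

Lemma gpow_scaled_hom : scaled_hom gconst (gpow full).
Proof.
have := den_act_scaled_hom (gpow_seq full).
by congr scaled_hom; apply: functional_extensionality => x; rewrite den_act_gpow_seq.
Qed.

Lemma br_gpow v1 b1 v2 b2 c1 c2 : fit br b1 -> fit br b2 ->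
  br (gpow full v1 + gpow c1 b1) (gpow full v2 + gpow c2 b2)
  = gconst *: (gpow full (br v1 v2) + gpow c1 (br b1 v2) - gpow c2 (br b2 v1)).
Proof.
move=> fb1 fb2; have [homG fitG] := gpow_scaled_hom.
have f1 := gpow_fit c1 fb1; have f2 := gpow_fit c2 fb2.
have [_ _ br1] := gpow_endo c1; have [_ _ br2] := gpow_endo c2.
have brG c b w : fit br b -> fit br (gpow c b) ->
    br (gpow c b) (gpow full w) = gconst *: gpow c (br b w).
  move=> fb fcb; rewrite -[gpow _ w](subrK (gconst *: w)) brDr.
  by have [_ _ brc] := gpow_endo c; rewrite (fit_abelian fcb (fitG w)) add0r brZr brc.
rewrite brDl !brDr (fit_abelian f1 f2) addr0 homG brG // [br _ (gpow c2 b2)]br_anti brG //.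
by rewrite scalerBr scalerDr addrAC.
Qed.

Lemma loc_rep_var i : (i < n)%N -> loc_rep (fun j => (i == j) : nat) (e i).
Proof.
move=> ilt; have [vi bi] := e_dom i; split=> // u fu.
by rewrite /gpow den_pow_delta ?iota_uniq // mem_iota.
Qed.

Lemma loc_rep_zero : loc_rep (fun _ => 0%N) (loc_zero A Lam).
Proof. by split=> [|//|u _]; [exact: inV0|exact: fit0|rewrite /gpow den_pow0]. Qed.

Lemma embed_zero c : embed c (loc_zero A Lam) = 0.
Proof. by rewrite /embed /= !(lin0 (gpow_linear _)) addr0 scaler0. Qed.

Lemma loc_rep_add c1 c2 x1 x2 : loc_rep c1 x1 -> loc_rep c2 x2 ->
  loc_rep (fun j => c1 j + c2 j)%N (loc_add br z x1 x2).
Proof.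
case=> v1 b1 d1 [v2 b2 d2]; split=> /=; first exact: inVD.
  by apply: fitD; apply: den_act_fit.
by move=> u fu; rewrite den_act_cat d2 // d1; [apply: gpow_comp|apply: gpow_fit].
Qed.

Lemma embed_add c1 c2 x1 x2 : loc_rep c1 x1 -> loc_rep c2 x2 ->
  (forall j, c1 j + c2 j <= n)%N ->
  embed (fun j => c1 j + c2 j)%N (loc_add br z x1 x2) = embed c1 x1 + embed c2 x2.
Proof.
case=> v1 b1 d1 [v2 b2 d2] c12; rewrite /embed /= d1 // d2 // -scalerDr.
rewrite !(linD (gpow_linear _)); congr (_ *: _); rewrite addrACA; congr (_ + _ + (_ + _)).
  by apply: gpow_comp => // j; have := c12 j; lia.
by apply: gpow_comp => // j; have := c12 j; lia.
Qed.

Lemma loc_rep_opp c x : loc_rep c x -> loc_rep c (loc_opp x).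
Proof. by case=> vx bx dx; split=> //=; [rewrite -scaleN1r; exact: inVZ|exact: fitN]. Qed.

Lemma embed_opp c x : embed c (loc_opp x) = - embed c x.
Proof. by rewrite /embed /= !(linN (gpow_linear _)) -opprD scalerN. Qed.

Lemma loc_rep_scale a c x : loc_rep c x -> loc_rep c (loc_scale a x).
Proof. by case=> vx bx dx; split=> //=; [exact: inVZ|exact: fitZ]. Qed.

Lemma embed_scale a c x : embed c (loc_scale a x) = a *: embed c x.
Proof. by rewrite /embed /= !(linZ (gpow_linear _)) -scalerDr !scalerA mulrC. Qed.

Lemma loc_rep_br c1 c2 x1 x2 : loc_rep c1 x1 -> loc_rep c2 x2 ->
  loc_rep (fun j => c1 j + c2 j)%N (loc_br br z x1 x2).
Proof.
case=> v1 b1 d1 [v2 b2 d2]; split=> /=; first exact: inV0.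
  by apply: fitB; [apply: fitD|]; apply: den_act_fit; [exact: fit_br|exact: fit_brl..].
by move=> u fu; rewrite den_act_cat d2 // d1; [apply: gpow_comp|apply: gpow_fit].
Qed.

Lemma embed_br c1 c2 x1 x2 : loc_rep c1 x1 -> loc_rep c2 x2 ->
  (forall j, c1 j + c2 j <= n)%N ->
  embed (fun j => c1 j + c2 j)%N (loc_br br z x1 x2) = br (embed c1 x1) (embed c2 x2).
Proof.
case=> v1 b1 d1 [v2 b2 d2] c12; rewrite /embed /= brZl brZr br_gpow //.
rewrite !scalerA mulfVK ?gconst_neq0 // (lin0 (gpow_linear _)) add0r; congr (_ *: _).
have fu := fit_br x1.1.1 x2.1.1.
have fw1 := fit_brl x2.1.1 b1; have fw2 := fit_brl x1.1.1 b2.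
rewrite den_act_cat (d2 _ fu) (d1 _ (gpow_fit c2 fu)) (d2 _ fw1) (d1 _ fw2).
rewrite (linB (gpow_linear _)) (linD (gpow_linear _)) (@gpow_comp c1 c2 _ _ fu (fun j => erefl)).
by congr (_ + _ - _); apply: gpow_comp => // j; have := c12 j; lia.
Qed.

Definition embed_env (i : nat) : A := embed (fun j => (i == j) : nat) (e i).

Local Notation evalL := (@eval_term k (loc_struct br z) e).
Local Notation evalA := (@eval_term k (lie_struct br) embed_env).

Lemma eval_term_embed t : (tvar_sup t <= n)%N -> (tsize t <= n)%N ->
  loc_rep (tcount t) (evalL t) /\ evalA t = embed (tcount t) (evalL t).
Proof.
elim: t => [i||a IHa b IHb|a IHa|c a IHa|a IHa b IHb] /=.
- by move=> ilt _; split; [exact: loc_rep_var|].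
- by split; [exact: loc_rep_zero|rewrite embed_zero].
- rewrite geq_max => /andP[va vb] sab.
  have [ra ->] := IHa va (leq_trans (leq_addr _ _) sab).
  have [rb ->] := IHb vb (leq_trans (leq_addl _ _) sab).
  have cab j := leq_trans (leq_add (tcount_le_size a j) (tcount_le_size b j)) sab.
  by split; [exact: loc_rep_add|rewrite embed_add].
- by move=> va sa; have [ra ->] := IHa va sa; split; [exact: loc_rep_opp|rewrite embed_opp].
- by move=> va sa; have [ra ->] := IHa va sa; split; [exact: loc_rep_scale|rewrite embed_scale].
- rewrite geq_max => /andP[va vb] sab.
  have [ra ->] := IHa va (leq_trans (leq_addr _ _) sab).
  have [rb ->] := IHb vb (leq_trans (leq_addl _ _) sab).
  have cab j := leq_trans (leq_add (tcount_le_size a j) (tcount_le_size b j)) sab.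
  by split; [exact: loc_rep_br|rewrite embed_br].
Qed.

Section Atoms.
Variables (c1 c2 : nat -> nat) (x1 x2 : loc_car A Lam).
Hypotheses (rep1 : loc_rep c1 x1) (rep2 : loc_rep c2 x2).
Hypotheses (c1n : forall j, (c1 j <= n)%N) (c2n : forall j, (c2 j <= n)%N).
Local Notation o1 := (fun j => n - c1 j)%N.
Local Notation o2 := (fun j => n - c2 j)%N.

(* Clearing the denominators of [b1/g1 - b2/g2] in two ways. *)
Lemma gpow_cross :
  gpow o1 (gpow o2 (den_act br z x2.2 x1.1.2 - den_act br z x1.2 x2.1.2))
  = gpow full (gpow o1 x1.1.2 - gpow o2 x2.1.2).
Proof.
have [_ b1 d1] := rep1; have [_ b2 d2] := rep2.
rewrite d2 // d1 // !(linB (gpow_linear _)).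
rewrite (@gpow_comp o2 c2 full) => [|//|j]; last by have := c2n j; lia.
rewrite (gpow_commute _ (gpow_endo o1) b1) (gpow_commute _ (gpow_endo o1) (gpow_fit c1 b2)).
rewrite (@gpow_comp o1 c1 full) => [|//|j]; last by have := c1n j; lia.
by rewrite (gpow_commute _ (gpow_endo o2) b2).
Qed.

Lemma embed_eqv : loc_eqv br z x1 x2 -> embed c1 x1 = embed c2 x2.
Proof.
have [_ b1 _] := rep1; have [_ b2 _] := rep2.
case=> v12 [t t0]; rewrite /embed v12; congr (_ *: (_ + _)); apply/eqP; rewrite -subr_eq0; apply/eqP.
have fd : fit br (gpow o1 x1.1.2 - gpow o2 x2.1.2) by apply: fitB; apply: gpow_fit.
apply: (den_act_eq0 (g := gpow_seq full)) => //.
apply: (den_act_eq0 (g := t)); first by rewrite den_act_gpow_seq; apply: gpow_fit.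
rewrite den_act_gpow_seq -gpow_cross.
have [_ com] := den_act_central t; rewrite -(com (gpow o1 \o gpow o2)).
- by rewrite /= t0 !(lin0 (gpow_linear _)).
- exact: fit_endo_comp (gpow_endo _) (gpow_endo _).
- by apply: fitB; apply: den_act_fit.
Qed.

Lemma eqv_embed : embed c1 x1 = embed c2 x2 -> loc_eqv br z x1 x2.
Proof.
have [v1 b1 _] := rep1; have [v2 b2 _] := rep2.
move/(scalerI (invr_neq0 gconst_neq0)) => e12.
have Gv : gpow full (x1.1.1 - x2.1.1) = gpow o2 x2.1.2 - gpow o1 x1.1.2.
  rewrite (linB (gpow_linear _)); apply: (addIr (gpow o1 x1.1.2 + gpow full x2.1.1)).
  by rewrite addrACA e12 addNr addr0 addrA subrK addrC.
have v12 : x1.1.1 = x2.1.1.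
  apply/eqP; rewrite -subr_eq0; apply/eqP; apply: inV_fit_eq0; first exact: inVB.
  have [_ fitG] := gpow_scaled_hom; have := fitG (x1.1.1 - x2.1.1).
  rewrite Gv => /(fitB (fitB (gpow_fit o2 b2) (gpow_fit o1 b1))).
  rewrite opprB addrC subrK => /(fitZ gconst^-1).
  by rewrite scalerA mulVf ?gconst_neq0 // scale1r.
split=> //; exists (gpow_seq o1 ++ gpow_seq o2).
rewrite den_act_cat !den_act_gpow_seq gpow_cross.
by move: e12; rewrite v12 => /addrI ->; rewrite subrr (lin0 (gpow_linear _)).
Qed.

End Atoms.

Lemma holds_embed f : (fbound f <= n)%N ->
  @holds k (loc_struct br z) e f <-> @holds k (lie_struct br) embed_env f.
Proof.
elim: f => //= [a b|g IHg|g IHg h IHh|g IHg h IHh|g IHg h IHh].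
- rewrite geq_max /tbound !geq_max => /andP[/andP[sa va] /andP[sb vb]].
  have [ra ->] := eval_term_embed va sa; have [rb ->] := eval_term_embed vb sb.
  have bd t : (tsize t <= n)%N -> forall j, (tcount t j <= n)%N.
    by move=> st j; apply: leq_trans (tcount_le_size t j) st.
  by split; [apply: embed_eqv|apply: eqv_embed]; try apply: bd.
- by move/IHg; tauto.
- by rewrite geq_max => /andP[/IHg ? /IHh ?]; tauto.
- by rewrite geq_max => /andP[/IHg ? /IHh ?]; tauto.
- by rewrite geq_max => /andP[/IHg ? /IHh ?]; tauto.
Qed.

End Embedding.

Lemma gpow_seq_nil e n c : (forall i, (e i).2 = [::]) -> gpow_seq e n c = [::].
Proof.
move=> e0; rewrite /gpow_seq /den_pow_seq; elim: (iota 0 n) => //= j s ->.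
by rewrite e0 cats0; elim: (c j).
Qed.

Lemma embed_env_nil e n : (forall i, (e i).2 = [::]) ->
  forall i, embed_env e n i = (e i).1.1 + (e i).1.2.
Proof.
move=> e0 i; have gpowE c x : gpow e n c x = x.
  by rewrite -den_act_gpow_seq gpow_seq_nil.
by rewrite /embed_env /embed /gconst gpow_seq_nil // /den_const big_nil invr1 scale1r !gpowE.
Qed.

Lemma lift_env (eA : nat -> A) : exists e : nat -> loc_car A Lam,
  [/\ forall i, loc_dom br z (e i), forall i, (e i).2 = [::]
    & forall i, eA i = (e i).1.1 + (e i).1.2].
Proof.
have decomp i : exists vb : A * A, [/\ inV z vb.1, fit br vb.2 & eA i = vb.1 + vb.2].
  by have [v [b vbP]] := inV_fit_decomp (eA i); exists (v, b).
have [vb vbP] := choice _ decomp.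
by exists (fun i => ((vb i).1, (vb i).2, [::])); split=> // i; have [] := vbP i.
Qed.

End LieAlgebra.

Theorem proposition4p2p2 (k : fieldType) (A : lmodType k) (br : A -> A -> A)
  (Lam : Type) (z : Lam -> A) :
  lie_axioms br -> metabelian br -> fit_basis br z -> U_algebra br z ->
  univ_equiv (lie_struct br) (loc_struct br z).
Proof.
move=> lieA metaA basis [fit_abelian torsion_free] f.
have holdsE (e : nat -> loc_car A Lam) (e_dom : forall i, loc_dom br z (e i)) :=
  holds_embed lieA metaA fit_abelian torsion_free basis e_dom (leqnn (fbound f)).
split=> [univA e e_dom | univL eA _].
  by apply/(holdsE e e_dom); apply: univA.
have [e [e_dom e_nil liftE]] := lift_env basis eA.
have := univL e e_dom; rewrite (holdsE e e_dom).
congr holds; apply: functional_extensionality => i.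
by rewrite embed_env_nil // liftE.
Qed.
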